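(* If the alphabet is countable, there exists a probability on sentences $\mu$ that is strongly Cournot, i.e. $\mu(\varphi)>0$ for every satisfiable sentence $\varphi$.
   Context: Setting: higher-order logic (Church's simple theory of types, without a description operator), with Henkin semantics; an alphabet is countable if its set of constants is countable. Sentences are closed terms of type $o$, $\mathcal S$ the set of sentences. A sentence is valid if true in every interpretation, satisfiable if true in some interpretation. A probability on sentences is a non-negative $\mu:\mathcal S\to\mathbb R$ with $\mu(\varphi)=1$ for valid $\varphi$ and $\mu(\varphi\vee\psi)=\mu(\varphi)+\mu(\psi)$ whenever $\neg(\varphi\wedge\psi)$ is valid. *)

From Stdlib Require Import Reals List.
Open Scope R_scope.
Set Implicit Arguments.

Inductive ty : Type :=
| Tind : ty
| To : ty
| Tarr : ty -> ty -> ty.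

Record alphabet : Type := Alphabet {
  const : Type;
  ctype : const -> ty
}.

Definition countable_alphabet (A : alphabet) : Prop :=
  exists f : const A -> nat, forall c d, f c = f d -> c = d.

Inductive var : list ty -> ty -> Type :=
| Vz : forall G t, var (t :: G) t
| Vs : forall G s t, var G t -> var (s :: G) t.

(* Intrinsically typed terms (no description operator).  Logical
   constants: negation, disjunction, universal quantifier Pi_a and
   equality Q_a at every type. *)
Inductive tm (A : alphabet) : list ty -> ty -> Type :=
| Var : forall G t, var G t -> tm A G t
| Cst : forall G (c : const A), tm A G (@ctype A c)
| App : forall G s t, tm A G (Tarr s t) -> tm A G s -> tm A G t
| Lam : forall G s t, tm A (s :: G) t -> tm A G (Tarr s t)
| LNeg : forall G, tm A G (Tarr To To)
| LOr : forall G, tm A G (Tarr To (Tarr To To))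
| LPi : forall G a, tm A G (Tarr (Tarr a To) To)
| LEq : forall G a, tm A G (Tarr a (Tarr a To)).

Definition sentence (A : alphabet) : Type := tm A nil To.

Definition sNeg A (p : sentence A) : sentence A := App (LNeg A nil) p.
Definition sOr A (p q : sentence A) : sentence A :=
  App (App (LOr A nil) p) q.
Definition sAnd A (p q : sentence A) : sentence A :=
  sNeg (sOr (sNeg p) (sNeg q)).

Definition env (D : ty -> Type) (G : list ty) : Type :=
  forall t, var G t -> D t.

Definition env_nil (D : ty -> Type) : env D nil :=
  fun t v =>
    match v in var G t' return match G with nil => D t' | _ => unit end with
    | Vz _ _ => tt
    | Vs _ _ => tt
    end.

Definition env_cons (D : ty -> Type) G s (d : D s) (r : env D G) : env D (s :: G) :=
  fun t v =>
    match v in var G' t'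
      return match G' with
             | nil => unit
             | s' :: G0 => D s' -> env D G0 -> D t'
             end with
    | Vz _ _ => fun d _ => d
    | @Vs _ _ _ v' => fun _ r => r _ v'
    end d r.

(* Henkin general models: an extensional frame (D_iota nonempty, D_o the
   two truth values, D_(a->b) a set of functions from D_a to D_b via
   [app]), an interpretation of the constants, and a denotation function
   defined on every term (comprehension), respecting the logical
   constants. *)
Record model (A : alphabet) : Type := Model {
  D : ty -> Type;
  app : forall a b, D (Tarr a b) -> D a -> D b;
  app_ext : forall a b (f g : D (Tarr a b)),
      (forall x, app f x = app g x) -> f = g;
  ind_ne : inhabited (D Tind);
  truth : D To -> bool;
  truth_inj : forall x y, truth x = truth y -> x = y;
  truth_surj : forall b, exists x, truth x = b;
  interp : forall c : const A, D (@ctype A c);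
  eval : forall G t, tm A G t -> env D G -> D t;
  eval_var : forall G t (v : var G t) r, eval (Var A v) r = r t v;
  eval_cst : forall G c r, eval (Cst A G c) r = interp c;
  eval_app : forall G s t (f : tm A G (Tarr s t)) (x : tm A G s) r,
      eval (App f x) r = app (eval f r) (eval x r);
  eval_lam : forall G s t (b : tm A (s :: G) t) r d,
      app (eval (Lam b) r) d = eval b (env_cons d r);
  eval_neg : forall G r p,
      truth (app (eval (LNeg A G) r) p) = negb (truth p);
  eval_or : forall G r p q,
      truth (app (app (eval (LOr A G) r) p) q) = orb (truth p) (truth q);
  eval_pi : forall G a r f,
      truth (app (eval (LPi A G a) r) f) = true <->
      (forall x, truth (app f x) = true);
  eval_eq : forall G a r x y,
      truth (app (app (eval (LEq A G a) r) x) y) = true <-> x = y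
}.

Definition true_in A (M : model A) (p : sentence A) : Prop :=
  truth M (eval M p (env_nil (D M))) = true.

Definition valid A (p : sentence A) : Prop := forall M : model A, true_in M p.
Definition satisfiable A (p : sentence A) : Prop := exists M : model A, true_in M p.

Definition probability A (mu : sentence A -> R) : Prop :=
  (forall p, 0 <= mu p) /\
  (forall p, valid p -> mu p = 1) /\
  (forall p q, valid (sNeg (sAnd p q)) -> mu (sOr p q) = mu p + mu q).

Definition strongly_cournot A (mu : sentence A -> R) : Prop :=
  forall p, satisfiable p -> 0 < mu p.

(** Sentences over a countable alphabet are countable, so one can choose
    models [M 0, M 1, ...] such that every satisfiable sentence is true in
    some [M n].  Each truth-value indicator [p |-> [M n |= p]] is a
    probability, and so is the mixture [mu = sum_n 2^-(n+1) [M n |= p]];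
    a satisfiable [p] then receives at least the weight of a model making
    it true. *)
From Pilot Require Import Defs.
From Stdlib Require Import Reals Lra Cantor Program.Equality.
From Stdlib Require Import ClassicalEpsilon FunctionalExtensionality.
From Coquelicot Require Import Coquelicot.
Set Implicit Arguments.
Unset Asymmetric Patterns.

Definition truth_value A (M : model A) (p : sentence A) : bool :=
  truth M (eval M p (env_nil (Defs.D M))).

Section TruthValue.
Variables (A : alphabet) (M : model A).

Lemma truth_value_sNeg (p : sentence A) : truth_value M (sNeg p) = negb (truth_value M p).
Proof. unfold truth_value, sNeg. rewrite eval_app. apply eval_neg. Qed.

Lemma truth_value_sOr (p q : sentence A) :
  truth_value M (sOr p q) = orb (truth_value M p) (truth_value M q).
Proof. unfold truth_value, sOr. rewrite !eval_app. apply eval_or. Qed.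

Lemma truth_value_sAnd (p q : sentence A) :
  truth_value M (sAnd p q) = andb (truth_value M p) (truth_value M q).
Proof.
  unfold sAnd. rewrite truth_value_sNeg, truth_value_sOr, !truth_value_sNeg.
  now destruct (truth_value M p), (truth_value M q).
Qed.

End TruthValue.

Lemma valid_excluded_middle A (p : sentence A) : valid (sOr p (sNeg p)).
Proof.
  intro M. change (truth_value M (sOr p (sNeg p)) = true).
  rewrite truth_value_sOr, truth_value_sNeg. now destruct (truth_value M p).
Qed.

Lemma valid_non_contradiction A (p : sentence A) : valid (sNeg (sAnd p (sNeg p))).
Proof.
  intro M. change (truth_value M (sNeg (sAnd p (sNeg p))) = true).
  rewrite truth_value_sNeg, truth_value_sAnd, truth_value_sNeg.
  now destruct (truth_value M p).
Qed.

Lemma probability_le_1 A (mu : sentence A -> R) p : probability mu -> mu p <= 1.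
Proof.
  intros (mu_ge0 & mu_valid & mu_add).
  pose proof (mu_valid _ (valid_excluded_middle p)) as Hone.
  rewrite (mu_add _ _ (valid_non_contradiction p)) in Hone.
  pose proof (mu_ge0 (sNeg p)). lra.
Qed.

Definition indicator A (M : model A) (p : sentence A) : R :=
  if truth_value M p then 1 else 0.

Lemma indicator_probability A (M : model A) : probability (indicator M).
Proof.
  unfold indicator. split; [|split].
  - intro p. destruct (truth_value M p); lra.
  - intros p Hp. now rewrite (Hp M : truth_value M p = true).
  - intros p q Hpq. specialize (Hpq M). change (truth_value M (sNeg (sAnd p q)) = true) in Hpq.
    rewrite truth_value_sNeg, truth_value_sAnd in Hpq. rewrite truth_value_sOr.
    destruct (truth_value M p), (truth_value M q); simpl in *; easy || ring.
Qed.

Lemma indicator_pos A (M : model A) p : true_in M p -> 0 < indicator M p.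
Proof. unfold indicator. intros Hp. rewrite (Hp : truth_value M p = true). lra. Qed.

Definition geom_weight (n : nat) : R := (/ 2) ^ S n.

Lemma geom_weight_pos n : 0 < geom_weight n.
Proof. apply pow_lt. lra. Qed.

Lemma is_series_geom_weight : is_series geom_weight 1.
Proof.
  replace 1 with (/ 2 * / (1 - / 2)) by field.
  apply (is_series_scal_l (V := R_NormedModule)), is_series_geom.
  rewrite Rabs_pos_eq; lra.
Qed.

Lemma ex_series_weighted (a : nat -> R) :
  (forall n, 0 <= a n <= 1) -> ex_series (fun n => geom_weight n * a n).
Proof.
  intro Ha.
  apply (@ex_series_le R_AbsRing R_CompleteNormedModule _ geom_weight);
    [|now exists 1; apply is_series_geom_weight].
  intro n. change (Rabs (geom_weight n * a n) <= geom_weight n).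
  pose proof (geom_weight_pos n). specialize (Ha n).
  rewrite Rabs_pos_eq by nra. nra.
Qed.

Lemma Series_ge_term (a : nat -> R) k :
  (forall n, 0 <= a n) -> ex_series a -> a k <= Series a.
Proof.
  intros Ha Hex.
  rewrite (Series_incr_n a (S k)) by (auto with arith || exact Hex). simpl pred.
  assert (Hhead : a k <= sum_f_R0 a k).
  { destruct k; simpl; [lra|]. pose proof (cond_pos_sum a k Ha). lra. }
  assert (Htail : 0 <= Series (fun j => a (S k + j)%nat)).
  { rewrite <- (Rmult_0_l (Series (fun j => a (S k + j)%nat))), <- Series_scal_l.
    apply Series_le; [intro n; specialize (Ha (S k + n)%nat); lra|].
    now apply (ex_series_incr_n a (S k)). }
  lra.
Qed.

Definition mixture A (mu : nat -> sentence A -> R) (p : sentence A) : R :=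
  Series (fun n => geom_weight n * mu n p).

Section Mixture.
Variables (A : alphabet) (mu : nat -> sentence A -> R).
Hypothesis mu_prob : forall n, probability (mu n).

Lemma ex_series_mixture p : ex_series (fun n => geom_weight n * mu n p).
Proof.
  apply ex_series_weighted. intro n. split.
  - apply (mu_prob n).
  - now apply probability_le_1.
Qed.

Lemma mixture_ge_term p k : geom_weight k * mu k p <= mixture mu p.
Proof.
  apply (Series_ge_term (a := fun n => geom_weight n * mu n p)); [|apply ex_series_mixture].
  intro n. pose proof (geom_weight_pos n). pose proof (proj1 (mu_prob n) p). nra.
Qed.

Lemma probability_mixture : probability (mixture mu).
Proof.
  split; [|split].
  - intro p. pose proof (mixture_ge_term p 0). pose proof (geom_weight_pos 0).
    pose proof (proj1 (mu_prob 0) p). nra.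
  - intros p Hp. unfold mixture.
    rewrite (Series_ext _ geom_weight).
    + apply is_series_unique, is_series_geom_weight.
    + intro n. rewrite (proj1 (proj2 (mu_prob n)) p Hp). ring.
  - intros p q Hpq. unfold mixture.
    rewrite (Series_ext _ (fun n => geom_weight n * mu n p + geom_weight n * mu n q)).
    + apply Series_plus; apply ex_series_mixture.
    + intro n. rewrite (proj2 (proj2 (mu_prob n)) p q Hpq). ring.
Qed.

Lemma mixture_pos p k : 0 < mu k p -> 0 < mixture mu p.
Proof. intro Hk. pose proof (mixture_ge_term p k). pose proof (geom_weight_pos k). nra. Qed.

End Mixture.

Lemma to_nat_inj_pair a b c d : to_nat (a, b) = to_nat (c, d) -> a = c /\ b = d.
Proof. intro H. apply to_nat_inj in H. now injection H. Qed.

Fixpoint code_ty (t : ty) : nat :=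
  match t with
  | Tind => to_nat (0, 0)
  | To => to_nat (1, 0)
  | Tarr a b => to_nat (2, to_nat (code_ty a, code_ty b))
  end%nat.

Lemma code_ty_inj t u : code_ty t = code_ty u -> t = u.
Proof.
  revert u; induction t; destruct u; cbn [code_ty]; intro H;
    apply to_nat_inj_pair in H; destruct H as [Hhd Htl]; try discriminate; auto.
  apply to_nat_inj_pair in Htl; destruct Htl as [Ha Hb]. f_equal; auto.
Qed.

(** Codes of variables and terms are compared across different types, so
    injectivity is stated on the dependent pairs [existT _ t e]. *)
Ltac existT_subst H :=
  let E := fresh "E" in
  pose proof (f_equal (@projT1 _ _) H) as E; cbn in E;
  try (injection E; clear E; intros); subst;
  apply Eqdep.EqdepTheory.inj_pair2 in H; subst.

Fixpoint code_var G t (v : Defs.var G t) : nat :=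
  match v with Vz _ _ => 0 | Vs _ v' => S (code_var v') end.

Lemma code_var_inj G t (v : Defs.var G t) t' (w : Defs.var G t') :
  code_var v = code_var w -> existT (Defs.var G) t v = existT (Defs.var G) t' w.
Proof.
  revert t' w; induction v; intros t' w; dependent destruction w; simpl; intro H;
    try discriminate; auto.
  injection H as H. specialize (IHv _ _ H). existT_subst IHv. reflexivity.
Qed.

Section CodeTerms.
Variables (A : alphabet) (code_const : const A -> nat).
Hypothesis code_const_inj : forall c d, code_const c = code_const d -> c = d.

Fixpoint code_tm G t (e : tm A G t) : nat :=
  match e with
  | Defs.Var _ v => to_nat (0, code_var v)
  | Defs.Cst _ _ c => to_nat (1, code_const c)
  | @Defs.App _ _ s _ f x => to_nat (2, to_nat (code_ty s, to_nat (code_tm f, code_tm x)))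
  | @Defs.Lam _ _ s _ b => to_nat (3, to_nat (code_ty s, code_tm b))
  | LNeg _ _ => to_nat (4, 0)
  | LOr _ _ => to_nat (5, 0)
  | LPi _ _ a => to_nat (6, code_ty a)
  | LEq _ _ a => to_nat (7, code_ty a)
  end%nat.

Lemma code_tm_inj G t (e : tm A G t) t' (e' : tm A G t') :
  code_tm e = code_tm e' -> existT (tm A G) t e = existT (tm A G) t' e'.
Proof.
  revert t' e'; induction e; intros t' e'; dependent destruction e'; cbn [code_tm];
    intro H; apply to_nat_inj_pair in H; destruct H as [Hhd Htl]; try discriminate.
  - apply code_var_inj in Htl. existT_subst Htl. reflexivity.
  - apply code_const_inj in Htl. subst. reflexivity.
  - apply to_nat_inj_pair in Htl; destruct Htl as [Hs Hfx].
    apply to_nat_inj_pair in Hfx; destruct Hfx as [Hf Hx].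
    apply code_ty_inj in Hs. subst.
    specialize (IHe1 _ _ Hf). specialize (IHe2 _ _ Hx).
    existT_subst IHe1. existT_subst IHe2. reflexivity.
  - apply to_nat_inj_pair in Htl; destruct Htl as [Hs Hb]. apply code_ty_inj in Hs. subst.
    specialize (IHe _ _ Hb). existT_subst IHe. reflexivity.
  - reflexivity.
  - reflexivity.
  - apply code_ty_inj in Htl. subst. reflexivity.
  - apply code_ty_inj in Htl. subst. reflexivity.
Qed.

End CodeTerms.

Lemma countable_sentences A :
  countable_alphabet A ->
  exists code : sentence A -> nat, forall p q, code p = code q -> p = q.
Proof.
  intros [code_const code_const_inj]. exists (@code_tm A code_const nil To).
  intros p q H. apply (code_tm_inj code_const code_const_inj) in H.
  now apply Eqdep.EqdepTheory.inj_pair2 in H.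
Qed.

Fixpoint full_dom (t : ty) : Type :=
  match t with Tind => unit | To => bool | Tarr a b => full_dom a -> full_dom b end.

Fixpoint full_default (t : ty) : full_dom t :=
  match t return full_dom t with
  | Tind => tt
  | To => true
  | Tarr a b => fun _ => full_default b
  end.

Definition bool_of_prop (P : Prop) : bool :=
  if excluded_middle_informative P then true else false.

Lemma bool_of_prop_true P : bool_of_prop P = true <-> P.
Proof. unfold bool_of_prop; destruct (excluded_middle_informative P); intuition congruence. Qed.

Section FullModel.
Variable A : alphabet.

Fixpoint full_eval G t (e : tm A G t) : env full_dom G -> full_dom t :=
  match e in tm _ G t return env full_dom G -> full_dom t with
  | Defs.Var _ v => fun r => r _ v
  | Defs.Cst _ _ c => fun _ => full_default (ctype A c)
  | Defs.App f x => fun r => (full_eval f r) (full_eval x r)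
  | Defs.Lam b => fun r d => full_eval b (env_cons d r)
  | LNeg _ _ => fun _ => negb
  | LOr _ _ => fun _ => orb
  | LPi _ _ a => fun _ (f : full_dom a -> bool) => bool_of_prop (forall x, f x = true)
  | LEq _ _ a => fun _ (x y : full_dom a) => bool_of_prop (x = y)
  end.

(** Only needed as a default inhabitant of [model A] for [epsilon]. *)
Definition full_model : model A.
Proof.
  refine (@Model A full_dom (fun a b (f : full_dom (Tarr a b)) x => f x) _ (inhabits tt)
    (fun b : full_dom To => b) _ _ (fun c => full_default (ctype A c)) full_eval
    _ _ _ _ _ _ _ _).
  - intros a b f g H. now apply functional_extensionality.
  - easy.
  - intro b. now exists b.
  - all: try reflexivity.
  - intros. apply bool_of_prop_true.
  - intros. apply bool_of_prop_true.
Defined.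

End FullModel.

Lemma witness_models A :
  (exists code : sentence A -> nat, forall p q, code p = code q -> p = q) ->
  exists M : nat -> model A, forall p, satisfiable p -> exists n, true_in (M n) p.
Proof.
  intros [code code_inj].
  pose (witnesses n (M : model A) := forall p, code p = n -> satisfiable p -> true_in M p).
  exists (fun n => epsilon (inhabits (full_model A)) (witnesses n)).
  intros p Hp. exists (code p).
  apply (epsilon_spec (inhabits (full_model A)) (witnesses (code p))); [|reflexivity|exact Hp].
  destruct Hp as [M HM]. exists M. intros q Hq _. now rewrite (code_inj _ _ Hq).
Qed.

Theorem mainTheorem15 (A : alphabet) :
  countable_alphabet A ->
  exists mu : sentence A -> R, probability mu /\ strongly_cournot mu.
Proof.
  intro countable_A.
  destruct (witness_models (countable_sentences countable_A)) as [M HM].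
  exists (mixture (fun n => indicator (M n))). split.
  - apply probability_mixture. intro n. apply indicator_probability.
  - intros p Hp. destruct (HM p Hp) as [n Hn].
    apply mixture_pos with (k := n).
    + intro m. apply indicator_probability.
    + now apply indicator_pos.
Qed.
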